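(* Let $S=\{v_1,\ldots,v_n\}\subset\mathbb Z^n$, $n\ge3$, be non-acute, and suppose there are indices $i,s,t,u$ with $E_i=\{s,t,u\}$, $\langle v_s,v_t\rangle=-1$, $\langle v_s,e_i\rangle=-\langle v_t,e_i\rangle=\pm1$, $|\langle v_u,e_i\rangle|=1$ and $\langle v_u,v_u\rangle\ge3$. Let $$S'=(S\setminus\{v_s,v_t,v_u\})\cup\{v_s+v_t,\ v_u-\langle v_u,e_i\rangle e_i\}\subset\mathbb Z^{n-1}=\langle e_1,\ldots,e_{i-1},e_{i+1},\ldots,e_n\rangle$$ be the corresponding contraction. Write $\sum_{v\in S}v=\sum_{\alpha=1}^n k_\alpha e_\alpha$ and $\sum_{v\in S'}v=\sum_{\alpha\ne i}k'_\alpha e_\alpha$, and let $R_o^S=\{\alpha: k_\alpha \text{ odd}\}$, $R_o^{S'}=\{\alpha\ne i: k'_\alpha\text{ odd}\}$. Then $$\sum_{\alpha=1}^n k_\alpha^2>4n-3|R_o^S|\quad\Longleftrightarrow\quad \sum_{\alpha\ne i}k_\alpha'^2>4(n-1)-3|R_o^{S'}|.$$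
   Context: $\mathbb Z^n$ carries the standard dot product with standard basis $e_1,\ldots,e_n$. For $S=\{v_1,\ldots,v_n\}$, $E_j=\{\alpha:\langle v_\alpha,e_j\rangle\ne0\}$. $S$ is non-acute if $a_\alpha:=\langle v_\alpha,v_\alpha\rangle\ge1$ for all $\alpha$, $\langle v_\alpha,v_\beta\rangle\le0$ for $\alpha\ne\beta$, and $a_\alpha\ge-\sum_{\beta\ne\alpha}\langle v_\beta,v_\alpha\rangle$ for all $\alpha$. The inequality $\sum k_\alpha^2>4n-3|R_o|$ for a subset of $n$ vectors in $\mathbb Z^n$ with Wu element $\sum k_\alpha e_\alpha$ is the ''Wu obstruction''. *)

From mathcomp Require Import all_boot all_order all_algebra.
Set Implicit Arguments. Unset Strict Implicit. Unset Printing Implicit Defensive.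
Import Order.TTheory GRing.Theory Num.Theory.
Local Open Scope ring_scope.

Definition vecZ (n : nat) := 'I_n -> int.

Definition dotZ n (x y : vecZ n) : int := \sum_(j < n) x j * y j.

Definition eZ n (j : 'I_n) : vecZ n := fun k => (k == j)%:R.

Definition Eset n (v : 'I_n -> vecZ n) (j : 'I_n) : {set 'I_n} :=
  [set a | dotZ (v a) (eZ j) != 0].

Definition non_acute n (v : 'I_n -> vecZ n) : Prop :=
  [/\ forall a, 1 <= dotZ (v a) (v a),
      forall a b, a != b -> dotZ (v a) (v b) <= 0
    & forall a, dotZ (v a) (v a) >= - \sum_(b < n | b != a) dotZ (v b) (v a)].

(* the contraction S' : a list of vectors lying in the sublattice
   Z^{n-1} = <e_j : j <> i> of Z^n *)
Definition contraction n (v : 'I_n -> vecZ n) (i s t u : 'I_n) : seq (vecZ n) :=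
  [seq v a | a <- enum 'I_n & a \notin [set s; t; u]] ++
  [:: (fun k => v s k + v t k);
      (fun k => v u k - dotZ (v u) (eZ i) * eZ i k)].

Definition wu_coef n (S : seq (vecZ n)) (alpha : 'I_n) : int :=
  \sum_(w <- S) dotZ w (eZ alpha).

Definition oddZ (k : int) : bool := odd `|k|%N.

From mathcomp Require Import all_boot all_order all_algebra.
From mathcomp Require Import zify.
Set Implicit Arguments. Unset Strict Implicit. Unset Printing Implicit Defensive.
Import Order.TTheory GRing.Theory Num.Theory.
Local Open Scope ring_scope.

(* Off the coordinate i the contraction changes nothing in the Wu element:
   v_s + v_t and v_u - <v_u,e_i> e_i contribute exactly v_s + v_t + v_u there.
   At i, the only contributions to k_i come from E_i = {s, t, u}, and those of
   v_s and v_t cancel, so k_i = <v_u, e_i> = +-1.  Hence removing i lowers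
   sum k_a^2 by exactly 1, |R_o| by exactly 1 and n by 1, which shifts both
   sides of the Wu obstruction by the same amount. *)

Lemma dotZ_eZ n (w : vecZ n) (j : 'I_n) : dotZ w (eZ j) = w j.
Proof.
rewrite /dotZ (bigD1 j) //= big1 => [|k /negPf k_neq_j].
  by rewrite /eZ eqxx mulr1 addr0.
by rewrite /eZ k_neq_j mulr0.
Qed.

Lemma bigD3 (R : nmodType) (I : finType) (f : I -> R) (s t u : I) :
  s != t -> s != u -> t != u ->
  \sum_a f a = \sum_(a | a \notin [set s; t; u]) f a + (f s + f t + f u).
Proof.
move=> st su tu.
rewrite (bigID (mem [set s; t; u])) /= addrC; congr (_ + _).
rewrite (bigD1 s) ?inE ?eqxx //= (bigD1 t) ?inE ?eqxx ?orbT ?(eq_sym t s) ?st //=.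
rewrite (bigD1 u) ?inE ?eqxx ?orbT ?(eq_sym u s) ?(eq_sym u t) ?su ?tu //=.
rewrite big1 ?addr0 ?addrA // => a.
by rewrite !inE; case: (a =P s); case: (a =P t); case: (a =P u).
Qed.

Section WuElement.

Variables (n : nat) (v : 'I_n -> vecZ n).

Lemma wu_coef_family (alpha : 'I_n) :
  wu_coef [seq v a | a <- enum 'I_n] alpha = \sum_a v a alpha.
Proof.
rewrite /wu_coef big_map enumT -[Finite.enum _]/(index_enum _).
by apply: eq_bigr => a _; rewrite dotZ_eZ.
Qed.

Lemma wu_coef_contraction (i s t u alpha : 'I_n) :
  wu_coef (contraction v i s t u) alpha =
  \sum_(a | a \notin [set s; t; u]) v a alpha +
    (v s alpha + v t alpha + (v u alpha - v u i * eZ i alpha)).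
Proof.
rewrite /wu_coef /contraction big_cat /= big_map big_filter enumT.
rewrite -[Finite.enum _]/(index_enum _) !big_cons big_nil addr0 !dotZ_eZ.
by congr (_ + _); apply: eq_bigr => a _; rewrite dotZ_eZ.
Qed.

Variables (i s t u : 'I_n).
Hypotheses (st : s != t) (su : s != u) (tu : t != u).

Lemma wu_coef_contraction_off (alpha : 'I_n) : alpha != i ->
  wu_coef (contraction v i s t u) alpha =
  wu_coef [seq v a | a <- enum 'I_n] alpha.
Proof.
move=> /negPf alpha_neq_i.
rewrite wu_coef_contraction wu_coef_family (bigD3 _ st su tu).
by rewrite /eZ alpha_neq_i mulr0 subr0 addrA.
Qed.

Lemma wu_coef_family_contracted :
  Eset v i = [set s; t; u] -> v s i + v t i = 0 ->
  wu_coef [seq v a | a <- enum 'I_n] i = v u i.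
Proof.
move=> Ei st_cancel.
rewrite wu_coef_family (bigD3 _ st su tu) st_cancel add0r big1 ?add0r //.
by move=> a; rewrite -Ei inE dotZ_eZ negbK => /eqP.
Qed.

End WuElement.

Lemma wu_obstruction_contract n (k k' : 'I_n -> int) (i : 'I_n) :
  (forall alpha, alpha != i -> k' alpha = k alpha) -> `|k i| = 1 ->
  (\sum_(alpha < n) k alpha ^+ 2
     > 4 * n%:Z - 3 * #|[set alpha : 'I_n | oddZ (k alpha)]|%:Z)
  <->
  (\sum_(alpha < n | alpha != i) k' alpha ^+ 2
     > 4 * (n%:Z - 1) - 3 * #|[set alpha : 'I_n | (alpha != i) && oddZ (k' alpha)]|%:Z).
Proof.
move=> kk' ki_unit.
have ki_sq : k i ^+ 2 = 1 by apply/eqP; rewrite sqr_norm_eq1 ki_unit.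
have ki_odd : oddZ (k i) by move: ki_unit; rewrite /oddZ -abszE => -[->].
have -> : \sum_(alpha < n) k alpha ^+ 2 =
          1 + \sum_(alpha < n | alpha != i) k' alpha ^+ 2.
  by rewrite (bigD1 i) //= ki_sq; congr (_ + _); apply: eq_bigr => a /kk' ->.
have -> : [set alpha | oddZ (k alpha)] =
          i |: [set alpha | (alpha != i) && oddZ (k' alpha)].
  apply/setP => a; rewrite !inE.
  by case: (a =P i) => [-> //|/eqP /kk' ->].
rewrite cardsU1 inE eqxx /=.
set sq := \sum_(_ < n | _) _; set odds := #|_|.
lia.
Qed.

Theorem lemma1p9 (n : nat) (v : 'I_n -> vecZ n) (i s t u : 'I_n) :
  (3 <= n)%N ->
  non_acute v ->
  s != t -> s != u -> t != u ->
  Eset v i = [set s; t; u] ->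
  dotZ (v s) (v t) = -1 ->
  (dotZ (v s) (eZ i) = 1 /\ - dotZ (v t) (eZ i) = 1 \/
   dotZ (v s) (eZ i) = -1 /\ - dotZ (v t) (eZ i) = -1) ->
  `|dotZ (v u) (eZ i)| = 1 ->
  3 <= dotZ (v u) (v u) ->
  let S := [seq v a | a <- enum 'I_n] in
  let S' := contraction v i s t u in
  let k := wu_coef S in
  let k' := wu_coef S' in
  (\sum_(alpha < n) k alpha ^+ 2
     > 4 * n%:Z - 3 * #|[set alpha : 'I_n | oddZ (k alpha)]|%:Z)
  <->
  (\sum_(alpha < n | alpha != i) k' alpha ^+ 2
     > 4 * (n%:Z - 1) - 3 * #|[set alpha : 'I_n | (alpha != i) && oddZ (k' alpha)]|%:Z).
Proof.
move=> _ _ st su tu Ei _ st_i u_i _ S S' k k'.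
rewrite !dotZ_eZ in st_i u_i.
have st_cancel : v s i + v t i = 0 by case: st_i => -[]; lia.
apply: wu_obstruction_contract => [alpha|].
  exact: wu_coef_contraction_off.
by rewrite /k (wu_coef_family_contracted st su tu Ei st_cancel).
Qed.
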